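(* In a combinatorial auction with a finite set $M$ of heterogeneous items and $n$ bidders whose valuations are additive, there exists a randomized mechanism that is universally obviously strategy-proof and gives a $4$-approximation to the optimal social welfare.
   Context: A valuation $v_i:2^M\to\mathbb{R}_{\ge 0}$ is additive if there are numbers $v_{ij}\ge 0$ ($j\in M$) with $v_i(A)=\sum_{j\in A}v_{ij}$ for all $A\subseteq M$. Each bidder's valuation is private and the domain $V_i$ of possible valuations (here: all additive valuations) is publicly known; utilities are quasi-linear (value of the received bundle minus payment). A feasible allocation assigns disjoint bundles to the bidders. A deterministic mechanism is a rooted tree: each internal node is assigned to one bidder, who at that node sends one of the messages labeling the outgoing edges; each leaf is labeled with a feasible allocation and a payment for each bidder. A behavior $B_i$ of bidder $i$ specifies a message at every node assigned to $i$; a behavior profile $B=(B_1,\dots,B_n)$ determines a root-to-leaf path $\mathrm{Path}(B)$, and $f_i(B),p_i(B)$ denote bidder $i$'s bundle and payment at its leaf. A strategy $\mathcal S_i$ maps each $v_i\in V_i$ to a behavior. $\mathcal S_i$ is obviously dominant if for every $v_i\in V_i$, every node $u$ assigned to $i$, every behaviors $B_{-i}$ of the others and every profile $B'$ such that $u\in\mathrm{Path}(\mathcal S_i(v_i),B_{-i})\cap\mathrm{Path}(B')$ and $B'_i$ sends at $u$ a message different from that of $\mathcal S_i(v_i)$, we have $v_i(f_i(\mathcal S_i(v_i),B_{-i}))-p_i(\mathcal S_i(v_i),B_{-i})\ge v_i(f_i(B'))-p_i(B')$. A deterministic mechanism with strategies is obviously strategy-proof (OSP) if all its strategies are obviously dominant.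 A randomized mechanism is a probability distribution over deterministic mechanisms, each equipped with strategies; it is universally OSP if every deterministic mechanism in its support is OSP. For a valuation profile $v$, its welfare $\mathbb{E}[W(v)]$ is the expected (over the random draw) total value of the allocation reached when all bidders follow their strategies; it gives an $\alpha$-approximation if $\mathrm{OPT}(v)\le\alpha\,\mathbb{E}[W(v)]$ for every profile $v$, where $\mathrm{OPT}(v)$ is the maximum of $\sum_i v_i(T_i)$ over feasible allocations $(T_1,\dots,T_n)$. *)

From HB Require Import structures.
From mathcomp Require Import all_boot all_order all_algebra.
From mathcomp Require Import all_classical all_reals all_analysis.
Set Implicit Arguments. Unset Strict Implicit. Unset Printing Implicit Defensive.
Import Order.TTheory GRing.Theory Num.Theory.
Local Open Scope ring_scope.

Section Mechanisms.
Variables (R : realType) (n : nat) (M : finType) (Msg : Type).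

Definition feasible (T : {ffun 'I_n -> {set M}}) : bool :=
  [forall i : 'I_n, forall j : 'I_n, (i != j) ==> [disjoint T i & T j]].

(* An internal node is assigned to a bidder, has the set
   [ok] of messages labelling its outgoing edges, and a child for each
   message; a leaf is labelled with an allocation and payments.
   Nodes are identified with their histories (sequences of messages from
   the root). *)
Inductive mtree : Type :=
| Leaf of {ffun 'I_n -> {set M}} & ('I_n -> R)
| Node of 'I_n & pred Msg & (Msg -> mtree).

Fixpoint wf_tree (t : mtree) : Prop :=
  match t with
  | Leaf a _ => feasible a
  | Node _ ok next => forall m, ok m -> wf_tree (next m)
  end.

Fixpoint node_at (t : mtree) (h : seq Msg) : option mtree :=
  match h with
  | [::] => Some t
  | m :: h' =>
      match t with
      | Leaf _ _ => None
      | Node _ ok next => if ok m then node_at (next m) h' else None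
      end
  end.

Definition behavior := seq Msg -> Msg.
Definition profile := 'I_n -> behavior.

Definition valid_beh (t : mtree) (i : 'I_n) (b : behavior) : Prop :=
  forall h ok next, node_at t h = Some (Node i ok next) -> ok (b h).

Definition valid_profile (t : mtree) (B : profile) : Prop :=
  forall i, valid_beh t i (B i).

(* outcome (allocation, payments) at the leaf reached by profile B,
   starting at subtree t located at history h *)
Fixpoint outcome (t : mtree) (B : profile) (h : seq Msg)
  : {ffun 'I_n -> {set M}} * ('I_n -> R) :=
  match t with
  | Leaf a p => (a, p)
  | Node i _ next => outcome (next (B i h)) B (rcons h (B i h))
  end.

Fixpoint onpath (t : mtree) (B : profile) (h : seq Msg) (u : seq Msg) : Prop :=
  match t with
  | Leaf _ _ => False
  | Node i _ next => u = h \/ onpath (next (B i h)) B (rcons h (B i h)) u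
  end.

Definition addval (v : M -> R) (A : {set M}) : R := \sum_(j in A) v j.

Definition utility (v : M -> R) (o : {ffun 'I_n -> {set M}} * ('I_n -> R))
  (i : 'I_n) : R := addval v (o.1 i) - o.2 i.

Definition additive_dom (v : M -> R) : Prop := forall j, 0 <= v j.

Definition strategies := 'I_n -> (M -> R) -> behavior.

Definition upd (B : profile) (i : 'I_n) (b : behavior) : profile :=
  fun j => if j == i then b else B j.

Definition OSP (t : mtree) (S : strategies) : Prop :=
  (forall i v, additive_dom v -> valid_beh t i (S i v)) /\
  forall (i : 'I_n) (v : M -> R), additive_dom v ->
  forall (u : seq Msg) ok next, node_at t u = Some (Node i ok next) ->
  forall (B B' : profile), valid_profile t B -> valid_profile t B' ->
    onpath t (upd B i (S i v)) [::] u -> onpath t B' [::] u ->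
    B' i u <> S i v u ->
    utility v (outcome t B' [::]) i <= utility v (outcome t (upd B i (S i v)) [::]) i.

Definition welfare (t : mtree) (S : strategies) (v : 'I_n -> M -> R) : R :=
  let o := outcome t (fun i => S i (v i)) [::] in
  \sum_(i < n) addval (v i) (o.1 i).

End Mechanisms.

Definition OPT (R : realType) (n : nat) (M : finType) (v : 'I_n -> M -> R) : R :=
  \big[Num.max/0]_(T : {ffun 'I_n -> {set M}} | feasible T)
     \sum_(i < n) addval (v i) (T i).

(* Split the bidders uniformly at random into price-setters and buyers.  The
   price-setters report first and each item is posted at the highest
   price-setter bid; then the buyers report one by one, in index order, and
   each item goes to the first buyer bidding strictly above its price or,
   failing that, to the first buyer bidding exactly its price.  When a buyer
   speaks, the prices and the earlier buyers' bids are fixed, and a later buyer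
   can only take an item on which it would gain nothing; price-setters never
   receive anything.  So truth-telling is obviously dominant.  For an item j,
   let t bid highest and s second highest: with probability at least 1/4, t is
   a buyer and s a price-setter, and then j is sold to a bidder of value v t j.
   Hence the expected welfare is at least (1/4) sum_j max_i v i j >= OPT / 4. *)

From HB Require Import structures.
From mathcomp Require Import all_boot all_order all_algebra.
From mathcomp Require Import all_classical all_reals all_analysis.
Import Order.TTheory GRing.Theory Num.Theory.
Set Implicit Arguments. Unset Strict Implicit. Unset Printing Implicit Defensive.
Local Open Scope ring_scope.

Section LeastIndex.
Variable n : nat.
Implicit Types (P : pred 'I_n) (i : 'I_n).

Definition is_least P i := P i && [forall b : 'I_n, (b < i)%N ==> ~~ P b].

Lemma is_least_uniq P i i' : is_least P i -> is_least P i' -> i = i'.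
Proof.
move=> /andP[Pi /forallP mini] /andP[Pi' /forallP mini'].
apply/val_inj; case: (ltngtP i i') => // lt;
  [move: (mini' i) | move: (mini i')]; by rewrite lt ?Pi ?Pi'.
Qed.

Lemma is_least_exists P b : P b -> exists i, is_least P i.
Proof.
move=> Pb; case: (arg_minnP val Pb) => i Pi mini; exists i.
apply/andP; split=> //; apply/forallP=> b'; apply/implyP=> lt_b'i.
by apply/negP=> /mini; rewrite leqNgt lt_b'i.
Qed.

End LeastIndex.

Lemma ltn_index_sorted (T : eqType) (ltT : rel T) (s : seq T) x y :
  transitive ltT -> irreflexive ltT -> sorted ltT s -> x \in s -> y \in s ->
  ltT x y -> (index x s < index y s)%N.
Proof.
move=> tr irr sorted_s xs ys ltxy; rewrite ltnNge leq_eqVlt.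
apply/negP=> /orP[/eqP/(index_inj x ys xs) eq_yx | lt_yx].
  by move: ltxy; rewrite eq_yx irr.
by move: (tr _ _ _ ltxy (sorted_ltn_index tr sorted_s y x ys xs lt_yx)); rewrite irr.
Qed.

Lemma sum_nth_enum (R : nmodType) (T : finType) (x0 : T) (g : T -> R) :
  \sum_(k < #|T|) g (nth x0 (enum T) k) = \sum_x g x.
Proof. by rewrite [RHS](big_nth x0) [index_enum T]unlock -enumT big_mkord cardE. Qed.

Lemma card_mul_le_sum_inj (R : numDomainType) (I T : finType) (f : I -> T -> T)
    (g : T -> R) (c : R) :
  (forall k, injective (f k)) -> (forall x, c <= \sum_k g (f k x)) ->
  #|T|%:R * c <= #|I|%:R * \sum_x g x.
Proof.
move=> f_inj c_le.
have -> : #|T|%:R * c = \sum_(x : T) c by rewrite sumr_const mulr_natl.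
apply: le_trans (ler_sum _ (fun x _ => c_le x)) _.
rewrite exchange_big (eq_bigr (fun=> \sum_x g x)) ?sumr_const ?mulr_natl // => k _.
by rewrite [RHS](reindex_inj (f_inj k)).
Qed.

Lemma exists_runner_up (R : realDomainType) (T : finType) (F : T -> R) t :
  exists s, forall b, b != t -> s != t /\ F b <= F s.
Proof.
case: (pickP (fun b => b != t)) => [b0 b0t | no_other]; last first.
  by exists t => b; rewrite no_other.
case: (@arg_maxP _ _ _ b0 (fun b => b != t) F b0t) => s st s_max.
by exists s => b bt; split; last exact: s_max.
Qed.

Section UniformNat.
Variables (R : realType) (N : nat).

Definition uniform_nat := mscale (N.+1%:R^-1 : R)%:nng (msum (fun k => \d_k) N.+1).
HB.instance Definition _ := Measure.on uniform_nat.

Lemma uniform_nat_setT : uniform_nat setT = 1%E.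
Proof.
rewrite /uniform_nat /mscale /= /msum.
rewrite (eq_bigr (fun=> 1%:E)) => [|k _]; last exact: diracT.
by rewrite sumEFin sumr_const card_ord -EFinM mulVf.
Qed.

HB.instance Definition _ := Measure_isProbability.Build _ _ _ uniform_nat uniform_nat_setT.

Lemma integral_uniform_nat (f : nat -> \bar R) : (forall k, 0 <= f k)%E ->
  (\int[uniform_nat]_k f k = (N.+1%:R^-1)%:E * \sum_(k < N.+1) f k)%E.
Proof.
move=> f0; rewrite ge0_integral_mscale //; congr (_ * _)%E.
rewrite ge0_integral_measure_sum //; apply: eq_bigr => k _.
by rewrite integral_dirac // diracE in_setT mul1e.
Qed.

End UniformNat.

Section SequentialMechanism.
Variables (R : realType) (n : nat) (M : finType) (Msg : Type).
Variable F : seq Msg -> {ffun 'I_n -> {set M}} * ('I_n -> R).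
Implicit Types (l : seq 'I_n) (h u : seq Msg) (B : profile n Msg).

Fixpoint sequential l h : mtree R n M Msg :=
  match l with
  | [::] => Leaf Msg (F h).1 (F h).2
  | i :: l' => Node i xpredT (fun m => sequential l' (rcons h m))
  end.

Fixpoint run l B h : seq Msg :=
  if l is i :: l' then run l' B (rcons h (B i h)) else h.

Lemma wf_sequential l h : (forall h, feasible (F h).1) -> wf_tree (sequential l h).
Proof. by move=> feasF; elim: l h => [|i l IHl] h //= m _; apply: IHl. Qed.

Lemma outcome_sequential l B h : outcome (sequential l h) B h = F (run l B h).
Proof. by elim: l h => [|i l IHl] h /=; [case: (F h) | apply: IHl]. Qed.

Lemma node_at_sequential l h u i ok next :
  node_at (sequential l h) u = Some (Node i ok next) ->
  [/\ (size u < size l)%N, nth i l (size u) = i & forall m, ok m].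
Proof.
elim: u l h => [|m u IHu] [|i' l] h //=; first by case=> <- <-.
by move/IHu=> [].
Qed.

Lemma run_prefix l B h : exists s, run l B h = h ++ s.
Proof.
elim: l h => [|i l IHl] h /=; first by exists [::]; rewrite cats0.
have [s ->] := IHl (rcons h (B i h)).
by exists (B i h :: s); rewrite -cats1 -catA.
Qed.

Lemma run_const l (f : 'I_n -> Msg) h : run l (fun i _ => f i) h = h ++ map f l.
Proof. by elim: l h => [|i l IHl] h /=; rewrite ?cats0 // IHl cat_rcons. Qed.

Lemma run_onpath l B h u (i0 : 'I_n) : onpath (sequential l h) B h u ->
  (size h <= size u)%N /\
  exists s, run l B h = u ++ B (nth i0 l (size u - size h)) u :: s.
Proof.
elim: l h => [|i l IHl] h //= [->|/IHl [le_hu [s ->]]].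
- rewrite subnn; split=> //.
  by have [s ->] := run_prefix l B (rcons h (B i h)); exists s; rewrite cat_rcons.
- rewrite size_rcons in le_hu; split; first exact: ltnW.
  by exists s; rewrite size_rcons -(subnSK le_hu).
Qed.

Lemma OSP_sequential l (report : 'I_n -> (M -> R) -> Msg) :
  (forall i v, additive_dom v -> forall past future future',
     (size past < size l)%N -> nth i l (size past) = i ->
     utility v (F (past ++ future')) i <= utility v (F (past ++ report i v :: future)) i) ->
  OSP (sequential l [::]) (fun i v _ => report i v).
Proof.
move=> truthful_best; split=> [i v _ h ok next /node_at_sequential[] //|].
move=> i v v_dom u ok next /node_at_sequential[lt_ul nth_ui _] B B' _ _ onB onB' _.
rewrite !outcome_sequential.
have [_ [s ->]] := run_onpath i onB; have [_ [s' ->]] := run_onpath i onB'.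
by rewrite subn0 nth_ui /upd eqxx; apply: truthful_best.
Qed.

End SequentialMechanism.

Section PostedPrice.
Variables (R : realType) (n : nat) (M : finType).
Implicit Types (w : {ffun 'I_n -> bool}) (r : 'I_n -> M -> R) (v : M -> R).

(* [w i] means that bidder [i] is a buyer; the other bidders only set prices. *)
Definition price w r j : R := \big[Num.max/0]_(a | ~~ w a) r a j.
Definition outbids w r j b := w b && (price w r j < r b j).
Definition ties w r j b := w b && (r b j == price w r j).

Definition wins w r i j :=
  is_least (outbids w r j) i ||
  [forall b, ~~ outbids w r j b] && is_least (ties w r j) i.

Definition alloc w r : {ffun 'I_n -> {set M}} := [ffun i => [set j | wins w r i j]].
Definition pay w r i : R := \sum_(j in alloc w r i) price w r j.

Lemma wins_uniq w r i i' j : wins w r i j -> wins w r i' j -> i = i'.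
Proof.
case/orP=> [out_i | /andP[/forallP no_out eq_i]];
  case/orP=> [out_i' | /andP[/forallP no_out' eq_i']].
- exact: is_least_uniq out_i out_i'.
- by move: (no_out' i); case/andP: out_i => ->.
- by move: (no_out i'); case/andP: out_i' => ->.
- exact: is_least_uniq eq_i eq_i'.
Qed.

Lemma feasible_alloc w r : feasible (alloc w r).
Proof.
apply/forallP=> i; apply/forallP=> i'; apply/implyP=> neq_ii'.
rewrite -setI_eq0; apply/eqP/setP=> j; rewrite !inE !ffunE !inE.
by apply/negP=> /andP[/wins_uniq win /win eq_ii']; rewrite eq_ii' eqxx in neq_ii'.
Qed.

Lemma wins_buyer w r i j : wins w r i j -> w i.
Proof. by case/orP=> [/andP[/andP[]] | /andP[_ /andP[/andP[]]]]. Qed.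

Lemma price_le_wins w r i j : wins w r i j -> price w r j <= r i j.
Proof.
by case/orP=> [/andP[/andP[_ /ltW]] | /andP[_ /andP[/andP[_ /eqP ->]]] _].
Qed.

Lemma utility_alloc w r v i :
  utility v (alloc w r, pay w r) i =
  \sum_j (if wins w r i j then v j - price w r j else 0).
Proof.
rewrite /utility /addval /pay /= -sumrB big_mkcond.
by apply: eq_bigr => j _; rewrite ffunE inE; case: ifP.
Qed.

Lemma utility_nonbuyer w r v i : ~~ w i -> utility v (alloc w r, pay w r) i = 0.
Proof.
move=> /negbTE nwi; rewrite utility_alloc big1 // => j _.
by case: ifP => // /wins_buyer; rewrite nwi.
Qed.

Lemma utility_buyer_truthful w r r' v i :
  w i -> (forall b, ~~ w b || (b < i)%N -> r' b = r b) -> r i = v ->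
  utility v (alloc w r', pay w r') i <= utility v (alloc w r, pay w r) i.
Proof.
move=> wi r'_r ri; rewrite !utility_alloc; apply: ler_sum => j _.
have same_price : price w r' j = price w r j.
  by apply: eq_bigr => a nwa; rewrite r'_r ?nwa.
have same_outbids (b : 'I_n) : (b < i)%N -> outbids w r' j b = outbids w r j b.
  by move=> lt_bi; rewrite /outbids same_price r'_r // lt_bi orbT.
have gain_ge0 : 0 <= (if wins w r i j then v j - price w r j else 0).
  by case: ifP => // /price_le_wins; rewrite ri subr_ge0.
case: ifP => // win'; rewrite same_price.
case: (leP (v j) (price w r j)) => [le_vp | lt_pv].
  by apply: le_trans gain_ge0; rewrite subr_le0.
suff -> : wins w r i j by [].
apply/orP; left; apply/andP; split; first by rewrite /outbids wi ri.
apply/forallP=> b; apply/implyP=> lt_bi; rewrite -same_outbids //.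
case/orP: win' => [/andP[_ /forallP/(_ b)] | /andP[/forallP/(_ b) -> _]] //.
by rewrite lt_bi.
Qed.

Definition bid_order w : seq 'I_n :=
  [seq i <- ord_enum n | ~~ w i] ++ [seq i <- ord_enum n | w i].

Lemma bid_order_uniq w : uniq (bid_order w).
Proof.
rewrite cat_uniq !filter_uniq ?ord_enum_uniq //= andbT.
by apply/hasPn=> i; rewrite !mem_filter => /andP[->].
Qed.

Lemma mem_bid_order w i : i \in bid_order w.
Proof. by rewrite mem_cat !mem_filter !mem_ord_enum !andbT orNb. Qed.

Lemma index_bid_order_lt w i b : w i -> ~~ w b || (b < i)%N ->
  (index b (bid_order w) < index i (bid_order w))%N.
Proof.
move=> wi before; rewrite !index_cat [i \in _]mem_filter wi /=.
case: ifPn => [setter_b | ]; first by apply: leq_trans (leq_addr _ _); rewrite index_mem.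
rewrite mem_filter mem_ord_enum andbT negbK => wb; rewrite ltn_add2l.
have sorted_buyers : sorted (relpre val ltn) [seq a <- ord_enum n | w a].
  apply: sorted_filter; first by move=> ? ? ?; apply: ltn_trans.
  by rewrite -sorted_map val_ord_enum iota_ltn_sorted.
apply: ltn_index_sorted sorted_buyers _ _ _; rewrite ?mem_filter ?mem_ord_enum ?wi ?wb //.
- by move=> ? ? ?; apply: ltn_trans.
- exact: ltnn.
- by rewrite wb in before.
Qed.

Definition reports w (H : seq (M -> R)) : 'I_n -> M -> R :=
  fun i => nth (fun=> 0) H (index i (bid_order w)).

Definition posted_price_outcome w (H : seq (M -> R)) :=
  (alloc w (reports w H), pay w (reports w H)).

Definition posted_price w : mtree R n M (M -> R) :=
  sequential (posted_price_outcome w) (bid_order w) [::].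

Definition truthful : strategies R n M (M -> R) := fun _ v _ => v.

Lemma wf_posted_price w : wf_tree (posted_price w).
Proof. by apply: wf_sequential => H; apply: feasible_alloc. Qed.

Lemma OSP_posted_price w : OSP (posted_price w) truthful.
Proof.
apply: OSP_sequential => i v _ past future future' lt_past nth_past.
have index_i : index i (bid_order w) = size past.
  by rewrite -{1}nth_past index_uniq ?bid_order_uniq.
have [wi | nwi] := boolP (w i); last by rewrite !utility_nonbuyer.
apply: utility_buyer_truthful => // [b before | ].
  have lt_b := index_bid_order_lt wi before; rewrite index_i in lt_b.
  by rewrite /reports !nth_cat lt_b.
by rewrite /reports index_i nth_cat ltnn subnn.
Qed.

Definition item_welfare w (v : 'I_n -> M -> R) j : R :=
  \sum_i (if wins w v i j then v i j else 0).

Lemma welfare_posted_price w (v : 'I_n -> M -> R) :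
  welfare (posted_price w) truthful v = \sum_j item_welfare w v j.
Proof.
rewrite /welfare outcome_sequential run_const /=.
have -> : reports w (map v (bid_order w)) = v.
  apply/funext=> i; rewrite /reports (nth_map i) ?nth_index ?mem_bid_order //.
  by rewrite index_mem mem_bid_order.
rewrite /addval /item_welfare [RHS]exchange_big /=; apply: eq_bigr => i _.
by rewrite big_mkcond; apply: eq_bigr => j _; rewrite ffunE inE.
Qed.

End PostedPrice.

Arguments posted_price {R n M} w.
Arguments truthful {R n M}.

Section Approximation.
Variables (R : realType) (n : nat) (M : finType).
Implicit Types (w : {ffun 'I_n -> bool}) (v : 'I_n -> M -> R).

Lemma item_welfare_ge0 w v j : (forall i, 0 <= v i j) -> 0 <= item_welfare w v j.
Proof. by move=> v0; apply: sumr_ge0 => i _; case: ifP. Qed.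

Lemma winner_le_item_welfare w v i j :
  (forall i, 0 <= v i j) -> wins w v i j -> v i j <= item_welfare w v j.
Proof.
move=> v0 win; rewrite /item_welfare (bigD1 i) //= win lerDl.
by apply: sumr_ge0 => b _; case: ifP.
Qed.

(* Either [t] is the only buyer above the price, or the price equals [v t j]
   and the item goes to the least buyer bidding exactly the price. *)
Lemma top_le_item_welfare w v j t :
  (forall i, 0 <= v i j) -> (forall i, v i j <= v t j) -> w t ->
  (forall b, w b -> b != t -> v b j <= price w v j) ->
  v t j <= item_welfare w v j.
Proof.
move=> v0 t_top wt others_le.
have price_le : price w v j <= v t j by apply/bigmax_leP.
have [/existsP[b out_b] | /existsPn no_out] := boolP [exists b, outbids w v j b].
  have only_t b' : outbids w v j b' -> b' = t.
    move=> /andP[wb' lt_b']; apply/eqP; apply: contraTT lt_b' => b't.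
    by rewrite -leNgt others_le.
  have [i least_i] := is_least_exists out_b.
  have eq_it := only_t i (andP least_i).1; rewrite -eq_it.
  by apply: winner_le_item_welfare; rewrite // /wins least_i.
have eq_tp : v t j = price w v j.
  by apply/eqP; rewrite eq_le price_le andbT leNgt; move: (no_out t); rewrite /outbids wt.
have ties_t : ties w v j t by rewrite /ties wt eq_tp eqxx.
have [b least_b] := is_least_exists ties_t.
have eq_bp : v b j = price w v j by case/andP: least_b => /andP[_ /eqP].
rewrite eq_tp -eq_bp; apply: winner_le_item_welfare => //.
by apply/orP; right; rewrite least_b andbT; apply/forallP.
Qed.

Definition toggle t s (k : bool * bool) w : {ffun 'I_n -> bool} :=
  [ffun x => w x (+) ((k.1 && (x == t)) (+) (k.2 && (x == s)))].

Lemma toggle_inj t s k : injective (toggle t s k).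
Proof. by apply: (can_inj (g := toggle t s k)) => w; apply/ffunP => x; rewrite !ffunE addbK. Qed.

Lemma toggle_top_runner_up t s w :
  let w' := toggle t s (~~ w t, (s != t) && w s) w in w' t /\ (s != t -> ~~ w' s).
Proof.
rewrite /= !ffunE eqxx andbT; case: eqVneq => [-> | st] /=; first by case: (w t).
by rewrite eqxx; case: (w t); case: (w s).
Qed.

Lemma card_mul_top_le_sum_item_welfare v j t s :
  (forall i, 0 <= v i j) -> (forall i, v i j <= v t j) ->
  (forall b, b != t -> s != t /\ v b j <= v s j) ->
  #|{ffun 'I_n -> bool}|%:R * v t j <= 4 * \sum_w item_welfare w v j.
Proof.
move=> v0 t_top s_runner_up.
have -> : 4 = #|{: bool * bool}|%:R :> R by rewrite card_prod card_bool.
apply: (card_mul_le_sum_inj (f := toggle t s)) => [k | w]; first exact: toggle_inj.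
set k := (~~ w t, (s != t) && w s); have [wt' ws'] := toggle_top_runner_up t s w.
have : v t j <= item_welfare (toggle t s k w) v j.
  apply: (top_le_item_welfare v0 t_top wt') => b wb bt.
  have [st le_bs] := s_runner_up b bt.
  by apply: le_trans le_bs _; apply: le_bigmax_cond; apply: ws'.
move/le_trans; apply.
rewrite (bigD1 k) //= lerDl; apply: sumr_ge0 => k' _; exact: item_welfare_ge0.
Qed.

Lemma card_mul_max_le_sum_item_welfare v j : (forall i, 0 <= v i j) ->
  #|{ffun 'I_n -> bool}|%:R * \big[Num.max/0]_i v i j <= 4 * \sum_w item_welfare w v j.
Proof.
move=> v0; case: (pickP (fun _ : 'I_n => true)) => [i0 _ | no_bidder]; last first.
  rewrite big_pred0 => [|i]; last by have := no_bidder i.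
  by rewrite mulr0 mulr_ge0 // sumr_ge0 // => w _; apply: item_welfare_ge0.
case: (@arg_maxP _ _ _ i0 xpredT (fun i => v i j)) => // t _ t_top.
have [s s_runner_up] := exists_runner_up (fun i => v i j) t.
apply: le_trans (card_mul_top_le_sum_item_welfare v0 (fun i => t_top i isT) s_runner_up).
by rewrite ler_wpM2l //; apply/bigmax_leP; split=> // i _; apply: t_top.
Qed.

Lemma OPT_le_sum_max v : (forall i j, 0 <= v i j) ->
  OPT v <= \sum_j \big[Num.max/0]_i v i j.
Proof.
move=> v0; have max_ge0 j : 0 <= \big[Num.max/0]_i v i j.
  by apply: (big_ind (fun x : R => 0 <= x)) => // x y x0 _; rewrite le_max x0.
apply/bigmax_leP; split=> [|T feasT]; first exact: sumr_ge0.
rewrite /addval; under eq_bigr do rewrite big_mkcond; rewrite exchange_big.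
apply: ler_sum => j _; case: (boolP [exists i, j \in T i]) => [/existsP[i jTi] | /existsPn jT].
  rewrite (bigD1 i) //= jTi big1 ?addr0 => [|i' i'i]; first exact: le_bigmax.
  have := forallP (forallP feasT i) i'; rewrite eq_sym i'i => /disjointFr.
  by move=> /(_ j jTi) ->.
by rewrite big1 // => i _; rewrite (negbTE (jT i)).
Qed.

Lemma card_mul_OPT_le_sum_welfare v : (forall i j, 0 <= v i j) ->
  #|{ffun 'I_n -> bool}|%:R * OPT v <=
  4 * \sum_w welfare (posted_price w) truthful v.
Proof.
move=> v0; under eq_bigr do rewrite welfare_posted_price.
apply: le_trans (ler_wpM2l _ (OPT_le_sum_max v0)) _ => //.
rewrite exchange_big !mulr_sumr; apply: ler_sum => j _.
exact: card_mul_max_le_sum_item_welfare.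
Qed.

End Approximation.

Theorem theorem4p1 (R : realType) (n : nat) (M : finType) :
  exists (d : measure_display) (Omega : measurableType d)
         (P : probability Omega R) (Msg : Omega -> Type)
         (t : forall w : Omega, mtree R n M (Msg w))
         (S : forall w : Omega, strategies R n M (Msg w)),
    (forall w, wf_tree (t w) /\ OSP (t w) (S w)) /\
    (forall v : 'I_n -> M -> R, (forall i, additive_dom (v i)) ->
       measurable_fun setT (fun w => welfare (t w) (S w) v) /\
       ((OPT v)%:E <= 4%:E * \int[P]_w (welfare (t w) (S w) v)%:E)%E).
Proof.
pose W := {ffun 'I_n -> bool}; pose part k : W := nth [ffun=> false] (enum W) k.
have W_gt0 : (0 < #|W|)%N by apply/card_gt0P; exists [ffun=> false].
exists _, nat, (uniform_nat R #|W|.-1), (fun=> M -> R),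
  (fun k => posted_price (part k)), (fun=> truthful).
split=> [k | v v_dom]; first by split; [exact: wf_posted_price | exact: OSP_posted_price].
have v0 i j : 0 <= v i j := v_dom i j.
(* Measurability is trivial: the sigma-algebra on [nat] is discrete. *)
split=> //; rewrite integral_uniform_nat => [|k]; last first.
  by rewrite lee_fin welfare_posted_price sumr_ge0 // => j _; apply: item_welfare_ge0.
rewrite sumEFin -!EFinM lee_fin (prednK W_gt0).
rewrite (sum_nth_enum _ (fun w => welfare (posted_price w) truthful v)).
by rewrite mulrCA ler_pdivlMl ?ltr0n //; apply: card_mul_OPT_le_sum_welfare.
Qed.
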